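(* Fix the time-space domain, i.e. fix $T>0$ and $X>0$. If $\|e(u_t)\|_\infty=O(\Delta t)$, then $\|e(u)\|_{2,\Delta}\to 0$ as $\Delta t,\Delta x\to 0$.
   Context: The time-space domain is $[0,T]\times[0,X]^d$, sampled on a regular grid with time levels $t^n=n\Delta t$, $n=0,\dots,N$, $\Delta t=T/N$, and $M$ points per spatial dimension with spacing $\Delta x=X/(M-1)$. $u$ is the exact (smooth) solution of the true PDE and $u_t$ its exact time derivative at the grid points. $\widehat{U}$ is the numerical solution on the same grid of the identified PDE, and $D_t\widehat{U}$ its numerical time derivative computed by forward differences $(\widehat{U}^{n+1}-\widehat{U}^n)/\Delta t$. The errors are $e(u)=\widehat{U}-u$ and $e(u_t)=D_t\widehat{U}-u_t$, vectorized over all grid points; $\|\cdot\|_\infty$ is the max-norm and $\|v\|_{2,\Delta}=\sqrt{\Delta x^d\,\Delta t}\,\|v\|_2$ is the grid-dependent $L_2$ norm. *)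

From HB Require Import structures.
From mathcomp Require Import all_boot all_order all_algebra.
From mathcomp Require Import all_classical all_reals all_analysis.
Set Implicit Arguments. Unset Strict Implicit. Unset Printing Implicit Defensive.
Import Order.TTheory GRing.Theory Num.Theory.
Import numFieldNormedType.Exports.
Local Open Scope classical_set_scope.
Local Open Scope ring_scope.

Section Grid.
Variables (R : realType) (d : nat).

Definition dt (T : R) (N : nat) : R := T / N%:R.
Definition dx (X : R) (M : nat) : R := X / (M.-1)%:R.

(* spatial grid point with multi-index j (j i in 0..M-1) *)
Definition gridpt (X : R) (M : nat) (j : 'I_d -> nat) : 'rV[R]_d :=
  \row_i ((j i)%:R * dx X M).

Definition domain (T X : R) : set (R * 'rV[R]_d) :=
  [set p : R * 'rV[R]_d | 0 <= p.1 <= T /\ forall i : 'I_d, 0 <= p.2 ord0 i <= X].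

(* A family of numerical solutions: Uhat N M n j is the value at time level
   n and spatial multi-index j on the grid with parameters (N, M). *)
Variables (u ut : R -> 'rV[R]_d -> R)
          (Uhat : nat -> nat -> nat -> ('I_d -> nat) -> R)
          (T X : R).

Definition err_u (N M n : nat) (j : 'I_d -> nat) : R :=
  Uhat N M n j - u (n%:R * dt T N) (gridpt X M j).

Definition err_ut (N M n : nat) (j : 'I_d -> nat) : R :=
  (Uhat N M n.+1 j - Uhat N M n j) / dt T N
  - ut (n%:R * dt T N) (gridpt X M j).

(* || e(u_t) ||_infty over all grid points where D_t Uhat is defined *)
Definition sup_err_ut (N M : nat) : R :=
  \big[Num.max/0]_(n < N)
    \big[Num.max/0]_(j : {ffun 'I_d -> 'I_M})
      `|err_ut N M n (fun i => nat_of_ord (j i))|.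

Definition l2D_err_u (N M : nat) : R :=
  Num.sqrt (dx X M ^+ d * dt T N *
    \sum_(n < N.+1) \sum_(j : {ffun 'I_d -> 'I_M})
       (err_u N M n (fun i => nat_of_ord (j i))) ^+ 2).

End Grid.

From HB Require Import structures.
From mathcomp Require Import all_boot all_order all_algebra.
From mathcomp Require Import all_classical all_reals all_analysis.
From mathcomp Require Import ring lra zify.
Import Order.TTheory GRing.Theory Num.Theory.
Import numFieldNormedType.Exports.
Local Open Scope classical_set_scope.
Local Open Scope ring_scope.

(* The error e^n = Uhat^n - u(t^n) vanishes at n = 0, and by the mean value
   theorem its increment over one time step is
   dt * (e(u_t)^n + u_t(t^n) - u_t(c)) for some c in (t^n, t^(n+1)).
   Summing at most N = T / dt increments gives
   |e^n| <= T * (||e(u_t)||_oo + w(dt)), where w is the modulus of continuity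
   in time of u_t, uniform on the compact domain (Heine-Cantor).  Both terms
   vanish with dt, and the grid-weighted L2 norm is at most
   sqrt((2X)^d * 2T) times the max-norm, uniformly in the grid. *)

Lemma compact_within_unif_continuous {R : realType} {U V : pseudoMetricType R}
    (K : set U) (f : U -> V) (eta : R) :
  compact K -> {within K, continuous f} -> 0 < eta -> exists2 delta : R, 0 < delta &
    forall p q, K p -> K q -> ball p delta q -> ball (f p) eta (f q).
Proof.
move=> Kc fc eta0.
pose P del q := forall p, K p -> ball q del p -> ball (f q) eta (f p).
have cover : \forall del \near (0 : R)^'+, K `<=` P del.
  move: Kc; rewrite compact_near_coveringP -near_covering_withinP.
  apply=> // x Kx.
  have [r r0 fxr] : exists2 r : R, 0 < r &
      forall p, K p -> ball x r p -> ball (f x) (eta / 2) (f p).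
    have : within K (nbhs x) (fun p => ball (f x) (eta / 2) (f p)).
      by rewrite (nbhs_subspace_in Kx); apply: (cvg_ball (fc x)); rewrite divr_gt0.
    by move=> /nbhs_ballP[r r0 xr]; exists r => // p Kp /xr; apply.
  exists (ball x (r / 2), [set e : R | 0 < e < r / 2]); first split.
  - by apply/nbhs_ballP; exists (r / 2) => //=; rewrite divr_gt0.
  - near=> e; apply/andP; split; near: e; first exact: nbhs_right_gt.
    by apply: nbhs_right_lt; rewrite divr_gt0.
  move=> [x' del] [/= xx' /andP[del0 delr]] Kx' p Kp x'p.
  have xp : ball x r p.
    by rewrite [r]splitr; apply: ball_triangle xx' (le_ball (ltW delr) x'p).
  have xx'r : ball x r x'.
    by apply: le_ball xx'; rewrite ler_pdivrMr // ler_peMr ?ler1n // ltW.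
  by rewrite [eta]splitr; apply: ball_triangle (ball_sym (fxr _ Kx' xx'r)) (fxr _ Kp xp).
near (0 : R)^'+ => del.
exists del => [|p q Kp Kq pq]; first by near: del; exact: nbhs_right_gt.
have KP : K `<=` P del by near: del.
exact: KP _ Kp q Kq pq.
Unshelve. all: by end_near.
Qed.

Section Grid.
Context {R : realType} {d : nat}.
Implicit Types (T X : R) (N M : nat).

Lemma domain_compact T X : compact (@domain R d T X).
Proof.
have -> : @domain R d T X =
    `[0, T]%classic `*` [set v : 'rV[R]_d | forall i, `[0, X]%classic (v ord0 i)].
  by apply/seteqP; split => -[t v]; rewrite /domain /= in_itv /=;
    move=> [-> xv]; split => // i; have := xv i; rewrite /= in_itv.
apply: compact_setX; first exact: segment_compact.
exact: (rV_compact (fun=> @segment_compact R 0 X)).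
Qed.

Lemma dt_gt0 T N : 0 < T -> (0 < N)%N -> 0 < dt T N.
Proof. by move=> T0 N0; rewrite divr_gt0 // ltr0n. Qed.

Lemma dx_gt0 X M : 0 < X -> (1 < M)%N -> 0 < dx X M.
Proof. by move=> X0 M1; rewrite divr_gt0 // ltr0n -ltnS prednK // ltnW. Qed.

Lemma time_level_le T N n : 0 < T -> (n <= N)%N -> n%:R * dt T N <= T.
Proof.
move=> T0; case: N => [|N]; first by rewrite leqn0 => /eqP->; rewrite mul0r ltW.
rewrite -(ler_nat R) => nN.
by rewrite /dt mulrA ler_pdivrMr ?ltr0n // mulrC ler_wpM2l // ltW.
Qed.

Lemma gridpt_in_domain T X M (j : 'I_d -> nat) t :
  0 <= X -> (1 < M)%N -> (forall i, (j i < M)%N) -> 0 <= t <= T ->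
  domain T X (t, gridpt X M j).
Proof.
move=> X0 M1 jM tT; split => // i /=; rewrite mxE /dx.
have M0 : 0 < (M.-1)%:R :> R by rewrite ltr0n -ltnS prednK // ltnW.
apply/andP; split; first by rewrite mulr_ge0 // divr_ge0 // ltW.
rewrite mulrCA ler_piMr // ler_pdivrMr // mul1r ler_nat.
by have := jM i; lia.
Qed.

Lemma grid_volume_le T X N M : 0 < T -> 0 < X -> (0 < N)%N -> (1 < M)%N ->
  dx X M ^+ d * dt T N * (M%:R ^+ d * N.+1%:R) <= (2 * X) ^+ d * (2 * T).
Proof.
move=> T0 X0 N0 M1.
have dxM : dx X M * M%:R <= 2 * X.
  have M0 : 0 < (M.-1)%:R :> R by rewrite ltr0n -ltnS prednK // ltnW.
  have MM : M%:R <= 2 * (M.-1)%:R :> R by rewrite -natrM ler_nat; lia.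
  by rewrite /dx mulrAC ler_pdivrMr //; nra.
have dtN : dt T N * N.+1%:R <= 2 * T.
  have NN : N.+1%:R <= 2 * N%:R :> R by rewrite -natrM ler_nat; lia.
  by rewrite /dt mulrAC ler_pdivrMr ?ltr0n //; nra.
rewrite mulrACA -exprMn; apply: ler_pM => //.
- by rewrite exprn_ge0 // mulr_ge0 // ltW // dx_gt0.
- by rewrite mulr_ge0 // ltW // dt_gt0.
- by rewrite lerXn2r // nnegrE mulr_ge0 // ltW // dx_gt0.
Qed.

Lemma time_cell_in_domain T X N M k (j : 'I_d -> nat) s :
  0 < T -> 0 <= X -> (1 < M)%N -> (forall i, (j i < M)%N) -> (k < N)%N ->
  k%:R * dt T N <= s <= k%:R * dt T N + dt T N -> domain T X (s, gridpt X M j).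
Proof.
move=> T0 X0 M1 jM kN /andP[ks sk]; apply: gridpt_in_domain => //.
have h0 : 0 < dt T N by rewrite dt_gt0 // (leq_ltn_trans (leq0n k)).
apply/andP; split; first by rewrite (le_trans _ ks) // mulr_ge0 // ltW.
by rewrite (le_trans sk) // -[X in _ + X]mul1r -mulrDl natr1 time_level_le.
Qed.

Lemma domain_time_modulus T X (f : R -> 'rV[R]_d -> R) (eta : R) :
  {within domain T X, continuous (fun p : R * 'rV[R]_d => f p.1 p.2)} -> 0 < eta ->
  exists2 delta : R, 0 < delta &
    forall t s x, domain T X (t, x) -> domain T X (s, x) ->
      `|t - s| < delta -> `|f t x - f s x| < eta.
Proof.
move=> fc eta0.
have [delta delta0 unif] :=
  compact_within_unif_continuous _ _ eta (domain_compact T X) fc eta0.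
exists delta => // t s x tx sx ts.
by apply: (unif (t, x) (s, x)) => //; split; [|exact: ballxx].
Qed.
End Grid.

Lemma norm_le_sum_increments {R : numDomainType} {V : normedZmodType R}
    (e : nat -> V) (b : R) n :
  e 0%N = 0 -> (forall k, (k < n)%N -> `|e k.+1 - e k| <= b) -> `|e n| <= n%:R * b.
Proof.
move=> e0; elim: n => [_|n IH step]; first by rewrite e0 normr0 mul0r.
rewrite -(subrK (e n) (e n.+1)) !mulr_natl mulrSr addrC.
apply: le_trans (ler_normD _ _) _; rewrite lerD ?step // -mulr_natl.
by apply: IH => k kn; apply: step; rewrite ltnS ltnW.
Qed.

Section ForwardDifferenceError.
Context {R : realType} {d : nat}.
Context {u ut : R -> 'rV[R]_d -> R} {Uhat : nat -> nat -> nat -> ('I_d -> nat) -> R}.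
Context {T X : R}.
Hypotheses (T0 : 0 < T) (X0 : 0 < X).
Hypothesis u_derive :
  forall t x, (t, x) \in domain T X -> is_derive t 1 (fun s => u s x) (ut t x).
Hypothesis Uhat_init : forall N M (j : 'I_d -> nat), (forall i, (j i < M)%N) ->
  Uhat N M 0%N j = u 0 (gridpt X M j).
Implicit Types (N M : nat).

Lemma err_ut_le_sup N M n (j : 'I_d -> nat) : (n < N)%N -> (forall i, (j i < M)%N) ->
  `|err_ut ut Uhat T X N M n j| <= sup_err_ut ut Uhat T X N M.
Proof.
move=> nN jM; pose jf : {ffun 'I_d -> 'I_M} := [ffun i => Ordinal (jM i)].
have -> : j = (fun i => jf i) by apply: funext => i; rewrite ffunE.
apply: le_trans (le_bigmax _ _ (Ordinal nN)).
exact: (le_bigmax _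
  (fun j : {ffun 'I_d -> 'I_M} => `|err_ut ut Uhat T X N M n (fun i => j i)|)).
Qed.

Lemma err_u_step N M n (j : 'I_d -> nat) :
  (1 < M)%N -> (forall i, (j i < M)%N) -> (n < N)%N ->
  let h := dt T N in let t := n%:R * h in let x := gridpt X M j in
  exists2 c, t < c < t + h &
    err_u u Uhat T X N M n.+1 j - err_u u Uhat T X N M n j
      = h * (err_ut ut Uhat T X N M n j + (ut t x - ut c x)).
Proof.
move=> M1 jM nN h t x.
have h0 : 0 < h by rewrite dt_gt0 // (leq_ltn_trans (leq0n n)).
have in_dom s : t <= s <= t + h -> (s, x) \in domain T X.
  move=> ts; rewrite inE.
  by apply: (time_cell_in_domain T X N M n j s) => //; exact: ltW.
have [c] : exists2 c, c \in `]t, t + h[ &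
    u (t + h) x - u t x = ut c x * (t + h - t).
  apply: (@MVT _ (fun s => u s x) (fun s => ut s x)); first by rewrite ltrDl.
  - by move=> s; rewrite in_itv => /andP[ts sth]; apply/u_derive/in_dom; rewrite !ltW.
  - apply: derivable_within_continuous => s; rewrite in_itv => sI.
    exact/ex_derive/u_derive/in_dom.
rewrite in_itv /= => cI uc; exists c => //.
have {}uc : u (t + h) x = u t x + h * ut c x.
  by rewrite -[LHS](subrK (u t x)) uc; ring.
rewrite /err_u /err_ut -/h -/t -/x -natr1 mulrDl mul1r -/t uc.
by field; rewrite gt_eqF.
Qed.

Lemma err_u_le N M (omega delta : R) n (j : 'I_d -> nat) :
  (0 < N)%N -> (1 < M)%N -> (forall i, (j i < M)%N) -> (n <= N)%N ->
  0 <= omega -> dt T N < delta ->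
  (forall t s x, domain T X (t, x) -> domain T X (s, x) ->
     `|t - s| < delta -> `|ut t x - ut s x| < omega) ->
  `|err_u u Uhat T X N M n j| <= T * (sup_err_ut ut Uhat T X N M + omega).
Proof.
move=> N0 M1 jM nN omega0 h_delta modulus.
set h := dt T N; set b := sup_err_ut ut Uhat T X N M + omega.
have h0 : 0 < h by rewrite dt_gt0.
have b0 : 0 <= b by rewrite addr_ge0 // bigmax_ge_id.
apply: (@le_trans _ _ (n%:R * (h * b))); last first.
  by rewrite mulrA ler_wpM2r // time_level_le.
apply: (norm_le_sum_increments (fun k => err_u u Uhat T X N M k j)) => [|k kn].
  by rewrite /err_u Uhat_init // mul0r subrr.
have kN := leq_trans kn nN.
have [c /andP[tc ch] ->] := err_u_step N M k j M1 jM kN.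
rewrite normrM gtr0_norm // ler_pM2l //.
apply: le_trans (ler_normD _ _) _; rewrite lerD ?err_ut_le_sup // ltW //.
have in_cell s : k%:R * h <= s <= k%:R * h + h -> domain T X (s, gridpt X M j).
  by apply: (time_cell_in_domain T X N M k j s) => //; exact: ltW.
apply: modulus; first by apply: in_cell; rewrite lexx lerDl ltW.
  by apply: in_cell; rewrite !ltW.
by rewrite distrC gtr0_norm ?subr_gt0 // (lt_trans _ h_delta) // ltrBlDl.
Qed.

Lemma l2D_err_u_le N M (B : R) : (0 < N)%N -> (1 < M)%N -> 0 <= B ->
  (forall (n : 'I_N.+1) (j : {ffun 'I_d -> 'I_M}),
     `|err_u u Uhat T X N M n (fun i => j i)| <= B) ->
  l2D_err_u u Uhat T X N M <= Num.sqrt ((2 * X) ^+ d * (2 * T)) * B.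
Proof.
move=> N0 M1 B0 errB.
have sumB : \sum_(n < N.+1) \sum_(j : {ffun 'I_d -> 'I_M})
    err_u u Uhat T X N M n (fun i => j i) ^+ 2 <= M%:R ^+ d * N.+1%:R * B ^+ 2.
  apply: (@le_trans _ _ (\sum_(n < N.+1) \sum_(j : {ffun 'I_d -> 'I_M}) B ^+ 2)).
    apply: ler_sum => n _; apply: ler_sum => j _.
    by rewrite -real_normK ?num_real // lerXn2r ?nnegrE.
  by rewrite !sumr_const card_ffun !card_ord -mulrnA -natrX -natrM mulr_natl.
have dx0 : 0 <= dx X M ^+ d * dt T N.
  by rewrite mulr_ge0 ?exprn_ge0 // ltW ?dx_gt0 ?dt_gt0.
have K0 : 0 <= (2 * X) ^+ d * (2 * T).
  by apply: mulr_ge0; [apply: exprn_ge0|]; apply: mulr_ge0 => //; exact: ltW.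
rewrite /l2D_err_u -(ger0_norm B0) -sqrtr_sqr -sqrtrM //.
apply: ler_wsqrtr; apply: le_trans (ler_wpM2l dx0 sumB) _.
by rewrite [leLHS]mulrA; apply: ler_wpM2r; [exact: sqr_ge0 | exact: grid_volume_le].
Qed.

End ForwardDifferenceError.

Theorem corollary1 (R : realType) (d : nat) (T X : R)
  (u ut : R -> 'rV[R]_d -> R)
  (Uhat : nat -> nat -> nat -> ('I_d -> nat) -> R) :
  0 < T -> 0 < X ->
  (* u is the exact smooth solution, ut its exact time derivative *)
  (forall t x, (t, x) \in domain T X -> is_derive t 1 (fun s => u s x) (ut t x)) ->
  {within domain T X, continuous (fun p : R * 'rV[R]_d => ut p.1 p.2)} ->
  (* the numerical solution starts from the exact initial data *)
  (forall N M (j : 'I_d -> nat), (forall i, (j i < M)%N) ->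
     Uhat N M 0%N j = u 0 (gridpt X M j)) ->
  (* || e(u_t) ||_infty = O(Delta t) as Delta t, Delta x -> 0 *)
  (exists C delta, 0 < delta /\
     forall N M : nat, (0 < N)%N -> (1 < M)%N ->
       dt T N < delta -> dx X M < delta ->
       sup_err_ut ut Uhat T X N M <= C * dt T N) ->
  (* then || e(u) ||_{2,Delta} -> 0 as Delta t, Delta x -> 0 *)
  forall eps : R, 0 < eps -> exists delta, 0 < delta /\
     forall N M : nat, (0 < N)%N -> (1 < M)%N ->
       dt T N < delta -> dx X M < delta ->
       l2D_err_u u Uhat T X N M < eps.
Proof.
move=> T0 X0 u_derive ut_cont Uhat_init [C [delta0 [delta0_gt0 sup_le_Cdt]]] eps eps_gt0.
set K := Num.sqrt ((2 * X) ^+ d * (2 * T)).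
have K_ge0 : 0 <= K := sqrtr_ge0 _.
(* chosen so that K * T * (c + c) = eps * K / (K + 1) < eps *)
set c := eps / (2 * T * (K + 1)).
have c_gt0 : 0 < c by rewrite divr_gt0 // !mulr_gt0 // ltr_wpDl.
have [delta1 delta1_gt0 ut_modulus] := domain_time_modulus T X ut c ut_cont c_gt0.
have C1_gt0 : 0 < `|C| + 1 by rewrite ltr_wpDl.
exists (Num.min delta0 (Num.min delta1 (c / (`|C| + 1)))).
split; first by rewrite !lt_min delta0_gt0 delta1_gt0 divr_gt0.
move=> N M N0 M1; rewrite !lt_min => /and3P[dt0 dt1 dt2] /and3P[dx0 _ _].
have sup_le_c : sup_err_ut ut Uhat T X N M <= c.
  apply: le_trans (sup_le_Cdt N M N0 M1 dt0 dx0) _.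
  have h_gt0 : 0 < dt T N by exact: dt_gt0.
  rewrite ltr_pdivlMr // in dt2; have := ler_norm C; nra.
have err_le (n : 'I_N.+1) (j : {ffun 'I_d -> 'I_M}) :
    `|err_u u Uhat T X N M n (fun i => j i)| <= T * (c + c).
  have jM i : (j i < M)%N := ltn_ord (j i).
  apply: le_trans (err_u_le T0 X0 u_derive Uhat_init N M c delta1 n _
    N0 M1 jM (ltn_ord n) (ltW c_gt0) dt1 ut_modulus) _.
  by rewrite ler_wpM2l ?lerD // ltW.
have err_bound_ge0 : 0 <= T * (c + c) by rewrite mulr_ge0 ?addr_ge0 // ltW.
apply: le_lt_trans (l2D_err_u_le T0 X0 N M _ N0 M1 err_bound_ge0 err_le) _.
have -> : K * (T * (c + c)) = eps * (K / (K + 1)).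
  by rewrite /c; field; rewrite !gt_eqF ?ltr_wpDl.
by rewrite gtr_pMr // ltr_pdivrMr ?ltr_wpDl // mul1r ltrDl.
Qed.
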